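(* Let $k\geq 0$ and put $T_i=2^{i}(2^{i+1}+1)$. Then there exist rational numbers $\alpha_0,\dots,\alpha_k$ (depending on $k$ but not on $n$) such that for all $n\geq 0$: $$S_k(n)=\sum_{i=0}^{k/2}\alpha_{2i}T_{2i}^{\,n}\ \text{ if $k$ is even},\qquad S_k(n)=\sum_{i=1}^{(k+1)/2}\alpha_{2i-1}T_{2i-1}^{\,n}\ \text{ if $k$ is odd}.$$
   Context: The Stern polynomials $B_n(t)\in\mathbb{Z}[t]$ are defined by $B_0(t)=0$, $B_1(t)=1$, and for $n\geq 1$: $B_{2n}(t)=tB_n(t)$, $B_{2n+1}(t)=B_n(t)+B_{n+1}(t)$. For $n\geq1$ let $e(n)=\deg B_n(t)$. For $k,n\geq 0$ let $S_k(n)=\sum_{a\geq 1:\;e(a)=n}a^{k}$ (a finite sum over the positive integers $a$ with $e(a)=n$). *)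

From HB Require Import structures.
From mathcomp Require Import all_boot all_order all_algebra.
Set Implicit Arguments. Unset Strict Implicit. Unset Printing Implicit Defensive.
Import Order.TTheory GRing.Theory Num.Theory.
Local Open Scope ring_scope.

(* Stern polynomials B_n(t) in Z[t], computed with fuel (fuel = n suffices,
   since the recursive calls are on m, m+1 <= n-1 for n >= 2). *)
Fixpoint stern_aux (fuel n : nat) : {poly int} :=
  match fuel with
  | 0%N => 0
  | f.+1 =>
    if n is 0%N then 0 else
    if n is 1%N then 1 else
    if ~~ odd n then 'X * stern_aux f n./2
    else stern_aux f n./2 + stern_aux f (n./2).+1
  end.

Definition stern (n : nat) : {poly int} := stern_aux n n.

Definition e (n : nat) : nat := (size (stern n)).-1.

Definition T (i : nat) : nat := (2 ^ i * (2 ^ i.+1 + 1))%N.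

Lemma stern_small : stern 2 = 'X /\ stern 3 = 'X + 1.
Proof. by rewrite /stern /= mulr1 addrC. Qed.

(* Every a >= 2 is 2b, 4b-1 or 4b+1 for a unique b >= 1, and in each case
   e(a) = e(b) + 1 (for 4b+-1 this uses |e(m+1) - e(m)| <= 1).  So the level set
   {e = n+1} is the image of {e = n} under these three maps, and expanding
   (2b)^k + (4b-1)^k + (4b+1)^k binomially gives
     S_k(n+1) = T_k S_k(n) + sum of c_j S_j(n) over j < k, j = k (mod 2),
   since the odd powers of -1 and 1 cancel.  By strong induction on k, a
   solution of such a first-order recurrence whose inhomogeneous part is a
   combination of the T_j^n (j < k) is a combination of T_k^n and those
   T_j^n, because the T_j are pairwise distinct. *)

From HB Require Import structures.
From mathcomp Require Import all_boot all_order all_algebra zify ring.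
Import Order.TTheory GRing.Theory Num.Theory.
Local Open Scope ring_scope.

Lemma stern_aux_fuel f g n :
  (n <= f)%N -> (n <= g)%N -> stern_aux f n = stern_aux g n.
Proof.
elim: f g n => [|f IH] [|g] [|[|n]] //= hf hg; try lia.
by case: ifP => odd_n; rewrite !(IH g) //; lia.
Qed.

Lemma stern_auxE f n : (n <= f)%N -> stern_aux f n = stern n.
Proof. by move=> n_le_f; apply: stern_aux_fuel. Qed.

Lemma stern_auxS f n : (2 <= n)%N -> stern_aux f.+1 n =
  if odd n then stern_aux f n./2 + stern_aux f n./2.+1 else 'X * stern_aux f n./2.
Proof. by case: n => [|[|n]] // _; rewrite /= !negbK; case: odd. Qed.

Lemma sternE n : (2 <= n)%N ->
  stern n = if odd n then stern n./2 + stern n./2.+1 else 'X * stern n./2.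
Proof.
case: n => [|n] // n_ge2; rewrite /stern stern_auxS //.
by case: ifP => odd_n; rewrite !stern_auxE //; lia.
Qed.

Lemma stern_even m : (0 < m)%N -> stern (2 * m) = 'X * stern m.
Proof.
move=> m_gt0; rewrite sternE; last by lia.
by rewrite mul2n odd_double /= doubleK.
Qed.

Lemma stern_odd m : (0 < m)%N -> stern (2 * m).+1 = stern m + stern m.+1.
Proof.
move=> m_gt0; rewrite sternE; last by lia.
by rewrite mul2n /= odd_double /= uphalf_double.
Qed.

Lemma size_lead_coefD_gt0 {R : numDomainType} (p q : {poly R}) :
  0 < lead_coef p -> 0 < lead_coef q ->
  size (p + q) = maxn (size p) (size q) /\ 0 < lead_coef (p + q).
Proof.
move=> p_gt0 q_gt0; case: ltngtP => [lt_pq|lt_qp|eq_pq].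
- by rewrite lead_coefDr // addrC size_polyDl.
- by rewrite lead_coefDl // size_polyDl.
have pq_top : (p + q)`_(size p).-1 = lead_coef p + lead_coef q.
  by rewrite coefD -lead_coefE eq_pq -lead_coefE.
have size_pq : size (p + q) = size p.
  apply/eqP; rewrite eqn_leq (leq_trans (size_polyD _ _)) -?eq_pq ?maxnn //=.
  have : (p + q)`_(size p).-1 != 0 by rewrite pq_top gt_eqF ?addr_gt0.
  apply: contraNT; rewrite -ltnNge => lt_size.
  by rewrite nth_default //; case: (size p) lt_size.
by rewrite lead_coefE size_pq pq_top addr_gt0.
Qed.

Lemma lead_coef_stern_gt0 n : (0 < n)%N -> 0 < lead_coef (stern n).
Proof.
elim/ltn_ind: n => -[|[|n]] IH // _; first by rewrite /stern /= lead_coef1.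
rewrite sternE //; case: ifP => odd_n.
  by apply: (proj2 (size_lead_coefD_gt0 _ _ (IH _ _ _) (IH _ _ _))); lia.
by rewrite mulrC lead_coefMX IH //; lia.
Qed.

Lemma stern_neq0 n : (0 < n)%N -> stern n != 0.
Proof. by move=> /lead_coef_stern_gt0; rewrite lt0r lead_coef_eq0 => /andP[]. Qed.

Lemma size_stern n : (0 < n)%N -> size (stern n) = (e n).+1.
Proof. by move=> n_gt0; rewrite prednK // size_poly_gt0 stern_neq0. Qed.

Lemma e1 : e 1 = 0%N.
Proof. by rewrite /e /stern /= size_poly1. Qed.

Lemma e_even m : (0 < m)%N -> e (2 * m) = (e m).+1.
Proof.
by move=> m_gt0; rewrite /e stern_even // mulrC size_mulX ?stern_neq0 ?size_stern.
Qed.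

Lemma e_odd m : (0 < m)%N -> e (2 * m).+1 = maxn (e m) (e m.+1).
Proof.
move=> m_gt0; rewrite /e stern_odd //.
have [-> _] := size_lead_coefD_gt0 _ _
  (lead_coef_stern_gt0 _ m_gt0) (lead_coef_stern_gt0 _ (ltn0Sn m)).
by rewrite !size_stern // maxnSS.
Qed.

Lemma e_succ_bound m : (0 < m)%N -> (e m.+1 <= (e m).+1 /\ e m <= (e m.+1).+1)%N.
Proof.
elim/ltn_ind: m => m IH m_gt0; have m_eq := odd_double_half m.
case: (odd m) m_eq => /= m_eq; last first.
  have [IH1 IH2] := IH m./2 ltac:(lia) ltac:(lia).
  rewrite -m_eq -mul2n e_odd ?e_even //; lia.
case: m./2 m_eq => [|j] m_eq; rewrite -m_eq; first by rewrite (e_even 1 isT) e1.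
have [IH1 IH2] := IH j.+1 ltac:(lia) isT.
have -> : (j.+1.*2).+2 = (2 * j.+2)%N by lia.
rewrite -mul2n e_odd ?e_even //; lia.
Qed.

Lemma e_4mulS b : (0 < b)%N -> e (4 * b).+1 = (e b).+1.
Proof.
move=> b_gt0; have [le_Sb _] := e_succ_bound _ b_gt0.
by rewrite -[4%N]/(2 * 2)%N -mulnA e_odd ?e_even ?e_odd ?muln_gt0 //; lia.
Qed.

Lemma e_4mulP b : (0 < b)%N -> e (4 * b).-1 = (e b).+1.
Proof.
case: b => [|[|b]] // _; first by rewrite (e_odd 1 isT) (e_even 1 isT) e1.
have [_ le_bS] := e_succ_bound _ (ltn0Sn b).
have -> : (4 * b.+2).-1 = (2 * (2 * b.+1).+1).+1 by lia.
rewrite e_odd //; have -> : (2 * b.+1).+2 = (2 * b.+2)%N by lia.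
rewrite e_odd // e_even //; lia.
Qed.

Lemma nat_ge2_decomp a : (2 <= a)%N -> exists2 b, (0 < b)%N &
  [\/ a = (2 * b)%N, a = (4 * b).+1 | a = (4 * b).-1].
Proof.
move=> a_ge2; case: (boolP (odd a)) => odd_a; last first.
  by exists a./2; [|constructor 1]; lia.
case: (boolP (odd a./2)) => odd_half.
  by exists a./2./2.+1; [|constructor 3]; lia.
by exists a./2./2; [|constructor 2]; lia.
Qed.

Lemma e_gt0 a : (2 <= a)%N -> (0 < e a)%N.
Proof.
by move=> /nat_ge2_decomp[b b_gt0 [] ->]; rewrite ?e_even ?e_4mulS ?e_4mulP.
Qed.

Fixpoint e_level (n : nat) : seq nat :=
  if n is n.+1 then
    [seq (2 * b)%N | b <- e_level n] ++ [seq (4 * b).-1 | b <- e_level n]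
      ++ [seq (4 * b).+1 | b <- e_level n]
  else [:: 1%N].

Lemma mem_e_level n a : (a \in e_level n) = (0 < a)%N && (e a == n).
Proof.
elim: n a => [|n IH] a.
  rewrite inE; case: a => [|[|a]] //; first by rewrite e1.
  by rewrite (gtn_eqF (e_gt0 a.+2 isT)).
apply/idP/andP => [|[a_gt0 /eqP ea]].
  rewrite /= !mem_cat => /or3P[] /mapP[b]; rewrite IH => /andP[b_gt0 /eqP <-] ->.
  - by rewrite e_even // muln_gt0.
  - by rewrite e_4mulP //; split => //; lia.
  - by rewrite e_4mulS.
have a_ge2 : (2 <= a)%N by case: a a_gt0 ea => [|[|a]] //; rewrite e1.
have [b b_gt0 a_eq] := nat_ge2_decomp _ a_ge2.
have b_in : b \in e_level n.
  rewrite IH b_gt0 /=; case: a_eq ea => ->.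
  - by rewrite e_even // => -[->].
  - by rewrite e_4mulS // => -[->].
  - by rewrite e_4mulP // => -[->].
rewrite /= !mem_cat; apply/or3P.
by case: a_eq => ->; [apply: Or31 | apply: Or33 | apply: Or32]; apply: map_f.
Qed.

Lemma e_level_gt0 n a : a \in e_level n -> (0 < a)%N.
Proof. by rewrite mem_e_level => /andP[]. Qed.

Lemma e_level_uniq n : uniq (e_level n).
Proof.
elim: n => [|n IH] //=; have pos := @e_level_gt0 n.
rewrite !cat_uniq !map_inj_in_uniq ?IH //=; try by move=> x y /pos ? /pos ?; lia.
rewrite has_cat negb_or andbT -andbA; apply/and3P; split;
  apply/hasPn => _ /mapP[b /pos b_gt0 ->]; apply/mapP => -[c /pos c_gt0]; lia.
Qed.

Section ExpSpan.

Context {F : fieldType} {t : nat -> F}.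

Definition exp_span (I : seq nat) (f : nat -> F) :=
  exists alpha : nat -> F, forall n, f n = \sum_(i <- I) alpha i * t i ^+ n.

Lemma exp_span_ext {I f g} : f =1 g -> exp_span I g -> exp_span I f.
Proof. by move=> eq_fg [alpha Hg]; exists alpha => n; rewrite eq_fg Hg. Qed.

Lemma exp_span0 I : exp_span I (fun=> 0).
Proof. by exists (fun=> 0) => n; rewrite big1 // => i _; rewrite mul0r. Qed.

Lemma exp_spanD {I f g} :
  exp_span I f -> exp_span I g -> exp_span I (fun n => f n + g n).
Proof.
move=> [alpha Hf] [beta Hg]; exists (fun i => alpha i + beta i) => n.
by rewrite Hf Hg -big_split; apply: eq_bigr => i _; rewrite mulrDl.
Qed.

Lemma exp_spanZ c {I f} : exp_span I f -> exp_span I (fun n => c * f n).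
Proof.
move=> [alpha Hf]; exists (fun i => c * alpha i) => n.
by rewrite Hf mulr_sumr; apply: eq_bigr => i _; rewrite mulrA.
Qed.

Lemma exp_span_sum I m (f : 'I_m -> nat -> F) :
  (forall j, exp_span I (f j)) -> exp_span I (fun n => \sum_(j < m) f j n).
Proof.
elim: m f => [|m IH] f Hf.
  by apply: (exp_span_ext _ (exp_span0 I)) => n; rewrite big_ord0.
apply: (exp_span_ext _ (exp_spanD (IH _ (fun j => Hf (widen_ord (leqnSn m) j)))
  (Hf ord_max))) => n.
by rewrite big_ord_recr.
Qed.

Lemma exp_span_subset {I J f} : uniq I -> uniq J -> {subset I <= J} ->
  exp_span I f -> exp_span J f.
Proof.
move=> uI uJ sIJ [alpha Hf]; exists (fun i => if i \in I then alpha i else 0) => n.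
have I_perm : perm_eq I [seq i <- J | i \in I].
  apply: uniq_perm; rewrite ?filter_uniq // => i.
  by rewrite mem_filter andb_idr //; apply: sIJ.
rewrite Hf (perm_big _ I_perm) big_filter big_mkcond.
by apply: eq_bigr => i _; case: ifP; rewrite ?mul0r.
Qed.

Hypothesis t_inj : injective t.

Lemma exp_span_rec {I k f} g : k \notin I -> exp_span I g ->
  (forall n, f n.+1 = t k * f n + g n) -> exp_span (k :: I) f.
Proof.
move=> kNI [alpha Hg] Hf.
(* gamma is a particular solution; the coefficient of t k fits the value at 0. *)
pose gamma i := alpha i / (t i - t k).
pose c := f 0%N - \sum_(i <- I) gamma i.
exists (fun i => if i == k then c else gamma i) => n; rewrite big_cons eqxx.
have -> : \sum_(i <- I) (if i == k then c else gamma i) * t i ^+ n =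
    \sum_(i <- I) gamma i * t i ^+ n.
  by apply: eq_big_seq => i iI; case: ifP => // /eqP i_eq_k; rewrite -i_eq_k iI in kNI.
elim: n => [|n IHn].
  by rewrite expr0 mulr1 (eq_bigr gamma) ?subrK // => i _; rewrite expr0 mulr1.
rewrite Hf IHn Hg mulrDr mulrCA -exprS -addrA; congr (_ + _).
rewrite mulr_sumr -big_split; apply: eq_big_seq => i iI /=.
have t_neq : t i - t k != 0.
  by rewrite subr_eq0; apply: contraNneq kNI => /t_inj <-.
by rewrite /gamma exprS; field.
Qed.

End ExpSpan.

Arguments exp_span {F} t I f.

(* The coefficient of x^(k-i-1) in (4x-1)^k + (4x+1)^k. *)
Definition child_coef (k i : nat) : nat :=
  if odd i then (2 * 4 ^ (k - i.+1) * 'C(k, i.+1))%N else 0%N.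

Lemma child_powersE (R : comPzRingType) (x : R) k :
  (2%:R * x) ^+ k + (4%:R * x - 1) ^+ k + (4%:R * x + 1) ^+ k =
  (T k)%:R * x ^+ k + \sum_(i < k) (child_coef k i)%:R * x ^+ (k - i.+1).
Proof.
have T_nat : T k = (2 ^ k + 2 * 4 ^ k)%N.
  by rewrite /T mulnDr muln1 addnC expnS mulnCA -expnMn.
have sum_pm : (4%:R * x - 1) ^+ k + (4%:R * x + 1) ^+ k =
    \sum_(i < k.+1) (4%:R * x) ^+ (k - i) * ((-1) ^+ i + 1) *+ 'C(k, i).
  by rewrite !exprDn -big_split; apply: eq_bigr => i _; rewrite /= expr1n -mulrnDl -mulrDr.
rewrite -addrA sum_pm big_ord_recl subn0 expr0 bin0 mulr1n addrA; congr (_ + _).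
  by rewrite T_nat natrD natrM !natrX !exprMn; ring.
apply: eq_bigr => i _; rewrite lift0 /child_coef -signr_odd /=.
case: (odd i) => /=; last by rewrite expr1 addNr mulr0 mul0rn mul0r.
by rewrite -mulr_natr !natrM natrX exprMn; ring.
Qed.

Lemma ltn_T : {homo T : i j / (i < j)%N}.
Proof. by move=> i j lt_ij; rewrite /T ltn_mul // ?ltn_add2r ltn_exp2l. Qed.

Lemma T_inj : injective T.
Proof. exact: mono_inj leqnn anti_leq (leq_mono ltn_T). Qed.

Definition power_sum (k n : nat) : rat := (\sum_(a <- e_level n) a ^ k)%N%:R.

Lemma power_sumE k n : power_sum k n = \sum_(a <- e_level n) a%:R ^+ k.
Proof. by rewrite /power_sum natr_sum; apply: eq_bigr => a _; rewrite natrX. Qed.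

Lemma power_sum_rec k n : power_sum k n.+1 =
  (T k)%:R * power_sum k n +
  \sum_(i < k) (child_coef k i)%:R * power_sum (k - i.+1) n.
Proof.
rewrite !power_sumE /= !big_cat /= !big_map -!big_split /=.
under eq_big_seq => b /e_level_gt0 b_gt0.
  rewrite -subn1 -natr1 natrB; last by lia.
  rewrite !natrM addrA child_powersE.
over.
rewrite big_split /= -mulr_sumr exchange_big /=; congr (_ + _).
by apply: eq_bigr => i _; rewrite power_sumE mulr_sumr.
Qed.

Definition parity_indices k := [seq i <- iota 0 k.+1 | odd i == odd k].

Lemma power_sum_span k :
  exp_span (fun i => (T i)%:R : rat) (parity_indices k) (power_sum k).
Proof.
have T_rat_inj : injective (fun i => (T i)%:R : rat).
  by move=> i j /eqP; rewrite eqr_nat => /eqP /T_inj.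
elim/ltn_ind: k => k IH.
pose J := [seq i <- iota 0 k | odd i == odd k].
have J_uniq : uniq J by rewrite filter_uniq ?iota_uniq.
have kNJ : k \notin J by rewrite mem_filter mem_iota add0n ltnn !andbF.
have span_kJ : exp_span (fun i => (T i)%:R) (k :: J) (power_sum k).
  apply: (exp_span_rec T_rat_inj
    (fun n => \sum_(i < k) (child_coef k i)%:R * power_sum (k - i.+1) n)
    kNJ _ (power_sum_rec k)).
  apply: exp_span_sum => i; rewrite /child_coef; case: ifP => odd_i; last first.
    by apply: (exp_span_ext _ (exp_span0 J)) => n; rewrite mul0r.
  have lt_ik := ltn_ord i.
  apply: exp_spanZ; apply: (exp_span_subset _ J_uniq _ (IH _ _)); last by lia.
    by rewrite filter_uniq ?iota_uniq.
  move=> j; rewrite !mem_filter !mem_iota /= oddB //= odd_i addbF.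
  by case/andP => -> /=; lia.
apply: (exp_span_subset _ _ _ span_kJ); rewrite ?filter_uniq ?iota_uniq //=.
  by rewrite kNJ.
move=> j; rewrite inE !mem_filter !mem_iota /= => /predU1P[->|/andP[-> /=]].
  by rewrite eqxx /=.
lia.
Qed.

Section ParitySums.

Variables (R : nmodType) (F : nat -> R).

Lemma sum_parity_indices k :
  \sum_(i <- parity_indices k) F i = \sum_(0 <= i < k.+1 | odd i == odd k) F i.
Proof. by rewrite big_filter /index_iota subn0. Qed.

Lemma sum_parity_indices_even m :
  \sum_(i <- parity_indices (2 * m)) F i = \sum_(0 <= i < m.+1) F (2 * i)%N.
Proof.
rewrite sum_parity_indices mul2n odd_double.
elim: m => [|m IH]; first by rewrite big_mkcond !big_nat1.
rewrite doubleS big_mkcond 2?[in LHS]big_nat_recr //= -big_mkcond IH.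
rewrite [in RHS]big_nat_recr //= odd_double addr0 -!mul2n /=.
by congr (_ + F _); lia.
Qed.

Lemma sum_parity_indices_odd m :
  \sum_(i <- parity_indices (2 * m).+1) F i = \sum_(1 <= i < m.+2) F (2 * i).-1.
Proof.
rewrite sum_parity_indices /= mul2n odd_double.
elim: m => [|m IH]; first by rewrite big_mkcond big_ltn // !big_nat1 /= add0r.
rewrite doubleS big_mkcond 2?[in LHS]big_nat_recr //= -big_mkcond IH.
rewrite [in RHS]big_nat_recr //= odd_double addr0 -!mul2n /=.
by congr (_ + F _); lia.
Qed.

End ParitySums.

Theorem mainTheorem10 (k : nat) :
  exists alpha : nat -> rat,
    forall n : nat,
      exists s : seq nat,
        [/\ uniq s,
            (forall a : nat, (a \in s) = (0 < a)%N && (e a == n)) &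
            ((\sum_(a <- s) a ^ k)%N%:R : rat) =
              (if ~~ odd k then
                 \sum_(0 <= i < (k./2).+1) alpha (2 * i)%N * (T (2 * i))%:R ^+ n
               else
                 \sum_(1 <= i < ((k.+1)./2).+1) alpha (2 * i).-1 * (T (2 * i).-1)%:R ^+ n)].
Proof.
have [alpha span_k] := power_sum_span k.
exists alpha => n; exists (e_level n); split; first exact: e_level_uniq.
  exact: mem_e_level.
rewrite -/(power_sum k n) span_k.
move: (odd_double_half k); set m := k./2; case: (odd k) => <-; rewrite -mul2n.
  have -> : ((1 + 2 * m).+1)./2 = m.+1 by lia.
  by rewrite add1n sum_parity_indices_odd.
exact: sum_parity_indices_even.
Qed.
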